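(* Let $N\ge2$, let $B=\{(s_k,\tilde s_k)\}_{0\le k<N}$ be a Pauli frame, let $p\in\mathcal P$, and let $i\ne j$ be qubits such that $(\lambda(s_i,p),\lambda(\tilde s_i,p))\ne(0,0)$ and $(\lambda(s_j,p),\lambda(\tilde s_j,p))\ne(0,0)$. For $\sigma,\tau\in\{X,Y,Z\}$ let $C(\sigma,\tau)_{ij}=\tfrac12(I+\sigma_i)+\tfrac12(I-\sigma_i)\tau_j$. Then among the nine gates $C(\sigma,\tau)_{ij}$, exactly four satisfy $\mathrm{Supp}(p,C(\sigma,\tau)_{ij}\cdot B)=\mathrm{Supp}(p,B)-1$, and the other five satisfy $\mathrm{Supp}(p,C(\sigma,\tau)_{ij}\cdot B)=\mathrm{Supp}(p,B)$.
   Context: Pauli space: $\mathcal P$ is the set of $N$-qubit Pauli operators modulo overall phase, an $\mathbb F_2$-vector space with addition given by product (mod phase); $\lambda(p,q)\in\mathbb F_2$ is $0$ if $p,q$ commute and $1$ otherwise. A Pauli frame is an ordered tuple $B=\{(s_k,\tilde s_k)\}_{0\le k<N}$ of elements of $\mathcal P$ with $\lambda(s_k,s_l)=\lambda(\tilde s_k,\tilde s_l)=0$, $\lambda(s_k,\tilde s_l)=\delta_{kl}$. For a frame $B$ let $\phi_B$ be the linear map of $\mathcal P$ with $\phi_B(Z_k)=s_k$, $\phi_B(X_k)=\tilde s_k$. The backward action of a Clifford unitary $V$ on $B$ is $V\cdot B:=\{(\phi_B(V^\dagger Z_kV),\phi_B(V^\dagger X_kV))\}_k$ (mod phase). Relative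 support: $\mathrm{Supp}(p,B)=\sum_k\big(\lambda(s_k,p)\vee\lambda(\tilde s_k,p)\big)$, with $\vee$ the logical OR and the sum over integers. *)

From mathcomp Require Import all_boot.
Set Implicit Arguments. Unset Strict Implicit. Unset Printing Implicit Defensive.

(* An N-qubit Pauli operator modulo phase is X^x Z^z (tensor over qubits),
   encoded by its bits (x_k, z_k) for each qubit k. *)
Definition Pauli (N : nat) := {ffun 'I_N -> bool * bool}.

Definition padd N (p q : Pauli N) : Pauli N :=
  [ffun k => (xorb (p k).1 (q k).1, xorb (p k).2 (q k).2)].
Definition pid N : Pauli N := [ffun _ => (false, false)].

Definition single N (k : 'I_N) (a : bool * bool) : Pauli N :=
  [ffun l => if l == k then a else (false, false)].
Definition Zop N (k : 'I_N) : Pauli N := single k (false, true).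
Definition Xop N (k : 'I_N) : Pauli N := single k (true, false).

(* lambda(p,q) : false (=0) iff p, q commute *)
Definition lam N (p q : Pauli N) : bool :=
  \big[addb/false]_(k < N) (((p k).1 && (q k).2) (+) ((p k).2 && (q k).1)).

Record frame (N : nat) := Frame { fs : 'I_N -> Pauli N; fst : 'I_N -> Pauli N }.

Definition is_frame N (B : frame N) : Prop :=
  forall k l : 'I_N,
    lam (fs B k) (fs B l) = false /\ lam (fst B k) (fst B l) = false /\
    lam (fs B k) (fst B l) = (k == l).

(* the linear map phi_B with phi_B(Z_k) = s_k, phi_B(X_k) = st_k *)
Definition phi N (B : frame N) (q : Pauli N) : Pauli N :=
  \big[@padd N/pid N]_(k < N)
     padd (if (q k).1 then fst B k else pid N) (if (q k).2 then fs B k else pid N).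

(* The three nontrivial single-qubit Paulis, indexed by 'I_3:
   0 = X, 1 = Y, 2 = Z, as (x,z) bits. *)
Definition pauli1 (a : 'I_3) : bool * bool :=
  match val a with 0 => (true, false) | 1 => (true, true) | _ => (false, true) end.

(* Conjugation V^dagger P V (mod phase) of a Pauli P by the Clifford gate
   V = C(sigma,tau)_{ij} = 1/2 (I + sigma_i) + 1/2 (I - sigma_i) tau_j.
   V is Hermitian and V^dagger P V = P * sigma_i^{lam(P,tau_j)} * tau_j^{lam(P,sigma_i)}
   up to phase. *)
Definition Cconj N (sg tau : 'I_3) (i j : 'I_N) (P : Pauli N) : Pauli N :=
  let si := single i (pauli1 sg) in
  let tj := single j (pauli1 tau) in
  padd P (padd (if lam P tj then si else pid N) (if lam P si then tj else pid N)).

Definition Cact N (sg tau : 'I_3) (i j : 'I_N) (B : frame N) : frame N :=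
  Frame (fun k => phi B (Cconj sg tau i j (Zop k)))
        (fun k => phi B (Cconj sg tau i j (Xop k))).

Definition Supp N (p : Pauli N) (B : frame N) : nat :=
  \sum_(k < N) ((lam (fs B k) p) || (lam (fst B k) p)).

From mathcomp Require Import all_boot zify.
Set Implicit Arguments. Unset Strict Implicit. Unset Printing Implicit Defensive.

(* Commutation with the frame is read off the pullback w of p, whose k-th
   component is (lam(s_k,p), lam(st_k,p)): lam(phi_B q, p) = lam(q, w), so
   Supp(p,B) is the number of nontrivial components of w.  The gate C is its
   own adjoint for lam, hence the pullback of p along C.B is C^dag w C, which
   differs from w only on qubits i and j.  What remains is a count over the
   nine gates and the nine possible nonzero pairs (w_i, w_j). *)

Definition symp (a b : bool * bool) : bool := (a.1 && b.2) (+) (a.2 && b.1).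
Definition padd1 (a b : bool * bool) : bool * bool := (a.1 (+) b.1, a.2 (+) b.2).

Lemma sympC a b : symp a b = symp b a.
Proof. by case: a b => [[] []] [[] []]. Qed.

Section Lambda.
Context {N : nat}.
Implicit Types (p q r : Pauli N) (k : 'I_N).

Lemma lamE p q : lam p q = \big[addb/false]_(k < N) symp (p k) (q k).
Proof. by []. Qed.

Lemma lamC p q : lam p q = lam q p.
Proof. by rewrite !lamE; apply: eq_bigr => k _; rewrite sympC. Qed.

Lemma lam_paddl p q r : lam (padd p q) r = lam p r (+) lam q r.
Proof.
rewrite !lamE -big_split; apply: eq_bigr => k _; rewrite ffunE.
by case: (p k) (q k) (r k) => [[] []] [[] []] [[] []].
Qed.

Lemma lam_pidl r : lam (pid N) r = false.
Proof. by rewrite lamE big1 // => k _; rewrite ffunE. Qed.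

Lemma lam_ifl c p r : lam (if c then p else pid N) r = c && lam p r.
Proof. by case: c; rewrite ?lam_pidl. Qed.

Lemma lam_singlel k a r : lam (single k a) r = symp a (r k).
Proof.
rewrite lamE (bigD1 k) //= big1 ?addbF ?ffunE ?eqxx // => l /negbTE nlk.
by rewrite ffunE nlk.
Qed.

End Lambda.

Definition pullback N (B : frame N) (p : Pauli N) : Pauli N :=
  [ffun k => (lam (fs B k) p, lam (fst B k) p)].

Definition weight N (q : Pauli N) : nat := \sum_(k < N) (q k != (false, false)).

Lemma lam_phi N (B : frame N) (p q : Pauli N) : lam (phi B q) p = lam q (pullback B p).
Proof.
rewrite /phi (big_morph (fun x => lam x p) (fun q r : Pauli N => lam_paddl q r p) (lam_pidl p)).
rewrite [RHS]lamE; apply: eq_bigr => k _ /=; rewrite lam_paddl !lam_ifl ffunE /symp /=.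
by case: (q k) => [[] []]; rewrite /= ?addbF.
Qed.

Lemma Supp_pullback N (B : frame N) (p : Pauli N) : Supp p B = weight (pullback B p).
Proof.
by apply: eq_bigr => k _; rewrite ffunE; case: (lam _ p); case: (lam _ p).
Qed.

Section Gate.
Variables (N : nat) (sg tau : 'I_3) (i j : 'I_N).

Lemma lam_Cconj (P w : Pauli N) : lam (Cconj sg tau i j P) w = lam P (Cconj sg tau i j w).
Proof.
rewrite /Cconj [RHS]lamC !lam_paddl !lam_ifl ![lam w _]lamC ![lam (single _ _) P]lamC.
by congr (_ (+) _); rewrite [RHS]addbC; congr (_ (+) _); apply: andbC.
Qed.

Lemma pullback_Cact (B : frame N) (p : Pauli N) :
  pullback (Cact sg tau i j B) p = Cconj sg tau i j (pullback B p).
Proof.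
apply/ffunP => k; rewrite [LHS]ffunE /= !lam_phi !lam_Cconj !lam_singlel /symp /=.
by rewrite addbF; case: (Cconj _ _ _ _ _ k).
Qed.

Lemma Cconj_out (w : Pauli N) k : k != i -> k != j -> Cconj sg tau i j w k = w k.
Proof.
move=> /negbTE ki /negbTE kj; rewrite ffunE.
by case: (lam _ _); case: (lam _ _); rewrite !ffunE ?ki ?kj; case: (w k) => [[] []].
Qed.

Definition cgate (a b : bool * bool) : (bool * bool) * (bool * bool) :=
  (padd1 a (if symp b (pauli1 tau) then pauli1 sg else (false, false)),
   padd1 b (if symp a (pauli1 sg) then pauli1 tau else (false, false))).

Hypothesis hij : i != j.

Lemma Cconj_ij (w : Pauli N) :
  (Cconj sg tau i j w i, Cconj sg tau i j w j) = cgate (w i) (w j).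
Proof.
have nji : (j == i) = false by rewrite eq_sym (negbTE hij).
rewrite /Cconj /cgate ![lam w _]lamC !lam_singlel ![symp (pauli1 _) _]sympC.
case: (symp (w j) _); case: (symp (w i) _);
  rewrite !ffunE ?eqxx ?(negbTE hij) ?nji /padd1 /=;
  by case: (w i) (w j) (pauli1 sg) (pauli1 tau) => [[] []] [[] []] [[] []] [[] []].
Qed.

End Gate.

Section Weight.
Variables (N : nat) (i j : 'I_N).
Hypothesis hij : i != j.

Lemma weight_split (q : Pauli N) :
  weight q = (q i != (false, false)) + (q j != (false, false))
             + \sum_(k | (k != i) && (k != j)) (q k != (false, false)).
Proof. by rewrite /weight (bigD1 i) // (bigD1 j) 1?eq_sym //= addnA. Qed.

Lemma weight_update (q q' : Pauli N) :
  (forall k, k != i -> k != j -> q' k = q k) ->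
  weight q' + (q i != (false, false)) + (q j != (false, false)) =
  weight q + (q' i != (false, false)) + (q' j != (false, false)).
Proof.
move=> eq_out; rewrite !weight_split.
have -> : \sum_(k | (k != i) && (k != j)) (q' k != (false, false)) =
          \sum_(k | (k != i) && (k != j)) (q k != (false, false)).
  by apply: eq_bigr => k /andP[ki kj]; rewrite eq_out.
lia.
Qed.

End Weight.

Lemma card_pairs3 (P : pred ('I_3 * 'I_3)) :
  #|[set g | P g]| = \sum_(a < 3) \sum_(b < 3) P (a, b).
Proof.
rewrite cardsE -sum1_card pair_bigA big_mkcond; apply: eq_bigr => -[a b] _ /=.
by rewrite unfold_in; case: (P (a, b)).
Qed.

Definition weight2 (c : (bool * bool) * (bool * bool)) : nat :=
  (c.1 != (false, false)) + (c.2 != (false, false)).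

Lemma cgate_count (a b : bool * bool) : a != (false, false) -> b != (false, false) ->
  #|[set g | weight2 (cgate g.1 g.2 a b) == 1]| = 4 /\
  #|[set g | weight2 (cgate g.1 g.2 a b) == 2]| = 5.
Proof.
by case: a b => [[] []] [[] []] // _ _; rewrite !card_pairs3 !big_ord_recr !big_ord0.
Qed.

Theorem mainTheorem6 (N : nat) (hN : 2 <= N) (B : frame N) (hB : is_frame B)
  (p : Pauli N) (i j : 'I_N) (hij : i != j)
  (hi : (lam (fs B i) p, lam (fst B i) p) != (false, false))
  (hj : (lam (fs B j) p, lam (fst B j) p) != (false, false)) :
  #|[set g : 'I_3 * 'I_3 | Supp p (Cact g.1 g.2 i j B) == (Supp p B).-1]| = 4 /\
  #|[set g : 'I_3 * 'I_3 | Supp p (Cact g.1 g.2 i j B) == Supp p B]| = 5.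
Proof.
set w := pullback B p.
have wi : w i != (false, false) by rewrite ffunE.
have wj : w j != (false, false) by rewrite ffunE.
have [count1 count2] := cgate_count wi wj.
have update (g : 'I_3 * 'I_3) :
    Supp p (Cact g.1 g.2 i j B) + 2 =
    weight w + weight2 (cgate g.1 g.2 (w i) (w j)).
  rewrite Supp_pullback pullback_Cact -/w -(Cconj_ij _ _ hij) /weight2 /=.
  by have := weight_update hij (Cconj_out g.1 g.2 w); rewrite wi wj; lia.
have w_ge2 : 2 <= weight w by rewrite (weight_split hij) wi wj.
rewrite Supp_pullback -/w; split; [rewrite -count1 | rewrite -count2];
  apply: eq_card => g; rewrite !inE; have := update g;
  by move: (Supp _ _) (weight2 _) => a b E; apply/eqP/eqP; lia.
Qed.
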